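(* Let $\mathbf{x}=[1,\mathbf{r}^\mathsf{T},\mathbf{t}^\mathsf{T}]^\mathsf{T}\in\mathbb{R}^{13}$, and let $\mathbf{Q}_1,\dots,\mathbf{Q}_{15}$, $\mathbf{A}_1,\dots,\mathbf{A}_{5N}\in\mathcal{S}^{13}$, the set $\mathcal{P}=\{\mathbf{x}: x_1=1,\ \mathbf{x}^\mathsf{T}\mathbf{A}_i\mathbf{x}\le0\ (i\in[5N]),\ \mathbf{x}^\mathsf{T}\mathbf{Q}_j\mathbf{x}=0\ (j\in[15])\}$, the center $\bar{\mathbf{x}}=[\mathrm{vec}(\bar{\mathbf{R}})^\mathsf{T},\bar{\mathbf{t}}^\mathsf{T}]^\mathsf{T}$ and $$\mathbf{W}(\mathbf{H})=\begin{bmatrix}\bar{\mathbf{x}}^\mathsf{T}\mathbf{H}\bar{\mathbf{x}}-1 & -\bar{\mathbf{x}}^\mathsf{T}\mathbf{H}\\ -\mathbf{H}\bar{\mathbf{x}} & \mathbf{H}\end{bmatrix}$$ be as described in the context. For a fixed integer $\kappa\ge0$ (relaxation order $\kappa+1$), consider the convex program: maximize $\log\det(\mathbf{H})$ over $\mathbf{H}\in\mathcal{S}^{12}$, $\mathbf{H}\succeq0$, and polynomials $\lambda_i,\mu_j\in\mathbb{R}_{2\kappa}[\mathbf{x}]$ ($i\in[5N]$, $j\in[15]$), subject to $$\mathbf{x}^\mathsf{T}\mathbf{W}(\mathbf{H})\mathbf{x}\preceq_{sos}\sum_{i=1}^{5N}\lambda_i(\mathbf{x})\,\mathbf{x}^\mathsf{T}\mathbf{A}_i\mathbf{x}+\sum_{j=1}^{15}\mu_j(\mathbf{x})\,\mathbf{x}^\mathsf{T}\mathbf{Q}_j\mathbf{x},\qquad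 \lambda_i\succeq_{sos}0\ (i\in[5N]).$$ Then its maximizer $\mathbf{H}^\star_\kappa$ defines an ellipsoid centered at $\bar{\mathbf{x}}$ bounding $\mathcal{P}$: every $[1,\mathbf{r}^\mathsf{T},\mathbf{t}^\mathsf{T}]^\mathsf{T}\in\mathcal{P}$ satisfies $\begin{bmatrix}\mathbf{r}-\mathrm{vec}(\bar{\mathbf{R}})\\ \mathbf{t}-\bar{\mathbf{t}}\end{bmatrix}^\mathsf{T}\mathbf{H}^\star_\kappa\begin{bmatrix}\mathbf{r}-\mathrm{vec}(\bar{\mathbf{R}})\\ \mathbf{t}-\bar{\mathbf{t}}\end{bmatrix}\le1$. Moreover, for every $\kappa$, $\log\det(\mathbf{H}^\star_\kappa)\le\log\det(\mathbf{H}^\star_{\kappa+1})$.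
   Context: Here $\mathbf{r}=\mathrm{vec}(\mathbf{R})\in\mathbb{R}^9$ (column stacking), $\mathbf{t}\in\mathbb{R}^3$, and $(\bar{\mathbf{R}},\bar{\mathbf{t}})$ is a given pose estimate. The matrices $\mathbf{Q}_j$ encode $\mathbf{R}\in\mathrm{SO}(3)$ through the homogeneous quadratic equations (with $x_1=1$): $\|\mathbf{r}_k\|^2-x_1^2=0$ for the columns $\mathbf{r}_k$ of $\mathbf{R}$, $\mathbf{r}_1\cdot\mathbf{r}_2=\mathbf{r}_1\cdot\mathbf{r}_3=\mathbf{r}_2\cdot\mathbf{r}_3=0$, and componentwise $\mathbf{r}_1\times\mathbf{r}_2=x_1\mathbf{r}_3$, $\mathbf{r}_2\times\mathbf{r}_3=x_1\mathbf{r}_1$, $\mathbf{r}_3\times\mathbf{r}_1=x_1\mathbf{r}_2$. The matrices $\mathbf{A}_i$ satisfy $\mathbf{x}^\mathsf{T}\mathbf{A}_i\mathbf{x}=2x_1\ell_i(\mathbf{r},\mathbf{t})$ where the linear inequalities $\ell_i\le0$ are, for each keypoint $k\in[N]$ with model point $\mathbf{b}_k\in\mathbb{R}^3$, pixel measurement $\mathbf{y}_k=[u_k,v_k,1]^\mathsf{T}$, radius $r_k>0$ and intrinsics $\mathbf{K}$: $-\hat{\mathbf{e}}_3^\mathsf{T}(\mathbf{R}\mathbf{b}_k+\mathbf{t})\le0$ and $\pm\hat{\mathbf{e}}_j^\mathsf{T}(\mathbf{y}_k\hat{\mathbf{e}}_3^\mathsf{T}-\mathbf{K})(\mathbf{R}\mathbf{b}_k+\mathbf{t})-r_k\hat{\mathbf{e}}_3^\mathsf{T}(\mathbf{R}\mathbf{b}_k+\mathbf{t})\le0$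 for $j=1,2$. $\mathbb{R}_d[\mathbf{x}]$ is the set of polynomials of degree at most $d$; $[\mathbf{x}]_k$ is the monomial vector of degree $k$ (which, as $x_1=1$, contains all monomials of degree $\le k$); $p\succeq_{sos}0$ means $p=[\mathbf{x}]_k^\mathsf{T}\mathbf{A}[\mathbf{x}]_k$ for some $\mathbf{A}\succeq0$, and $p\preceq_{sos}q$ means $q-p\succeq_{sos}0$. *)

From HB Require Import structures.
From mathcomp Require Import all_boot all_order all_algebra.
From mathcomp Require Import mpoly.
From mathcomp Require Import reals ereal exp.
Set Implicit Arguments. Unset Strict Implicit. Unset Printing Implicit Defensive.
Import Order.TTheory GRing.Theory Num.Theory.
Local Open Scope ring_scope.

(* Conventions.
   x = [x_1; r; t] in R^13 ; in Rocq index 0 is x_1 (= 1), indices 1..9 are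
   r = vec(R) (column stacking: entry R_{row,col} sits at 1 + 3*col + row),
   indices 10..12 are t.  Polynomials "in x" with x_1 = 1 are polynomials in
   the remaining 12 variables y = [r; t], i.e. elements of {mpoly R[12]}.  *)

Section Defs.
Variable R : realType.

Definition qf n (M : 'M[R]_n) (v : 'cV[R]_n) : R := (v^T *m M *m v) 0 0.

Definition psdmx n (M : 'M[R]_n) : Prop :=
  M^T = M /\ forall v : 'cV[R]_n, 0 <= qf M v.

Definition xvar (i : 'I_13) : {mpoly R[12]} :=
  match unlift ord0 i with Some j => 'X_j | None => 1 end.

Definition quadform (M : 'M[R]_13) : {mpoly R[12]} :=
  \sum_(i < 13) \sum_(j < 13) M i j *: (xvar i * xvar j).

(* symmetric matrix with x^T (Esym a b) x = x_a x_b *)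
Definition Esym (a b : 'I_13) : 'M[R]_13 :=
  2^-1 *: (delta_mx a b + delta_mx b a).

Definition ridx (row col : nat) : 'I_13 := inord (1 + 3 * col + row)%N.
Definition tidx (i : nat) : 'I_13 := inord (10 + i)%N.

(* The 15 matrices Q_j encoding R in SO(3):
   j = 0,1,2 : ||r_j||^2 - x_1^2 ;
   j = 3,4,5 : r_1.r_2, r_1.r_3, r_2.r_3 ;
   j = 6 + 3p + i : i-th component of r_p x r_(p+1) - x_1 r_(p+2)  (indices mod 3),
   i.e. r1 x r2 = x1 r3, r2 x r3 = x1 r1, r3 x r1 = x1 r2. *)
Definition Qmat (j : 'I_15) : 'M[R]_13 :=
  let j := nat_of_ord j in
  if (j < 3)%N then \sum_(i < 3) Esym (ridx i j) (ridx i j) - Esym ord0 ord0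
  else if (j < 6)%N then
    let ab := nth (0, 0)%N [:: (0, 1); (0, 2); (1, 2)]%N (j - 3)%N in
    \sum_(i < 3) Esym (ridx i ab.1) (ridx i ab.2)
  else
    let p := ((j - 6) %/ 3)%N in let i := ((j - 6) %% 3)%N in
    Esym (ridx ((i + 1) %% 3)%N p) (ridx ((i + 2) %% 3)%N ((p + 1) %% 3)%N)
    - Esym (ridx ((i + 2) %% 3)%N p) (ridx ((i + 1) %% 3)%N ((p + 1) %% 3)%N)
    - Esym ord0 (ridx i ((p + 2) %% 3)%N).

(* symmetric matrix with x^T (ell_mat c b) x = 2 x_1 c (R b + t) *)
Definition ell_mat (c : 'rV[R]_3) (b : 'cV[R]_3) : 'M[R]_13 :=
  \sum_(a < 3) \sum_(col < 3) (2 * c 0 a * b col 0) *: Esym ord0 (ridx a col)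
  + \sum_(a < 3) (2 * c 0 a) *: Esym ord0 (tidx a).

Definition ypix (u v : R) : 'cV[R]_3 := \col_(i < 3) [:: u; v; 1]`_i.

Definition e3 : 'cV[R]_3 := delta_mx (inord 2) 0.
Definition e_ (j : nat) : 'cV[R]_3 := delta_mx (inord j) 0.

(* the 5 linear constraints l <= 0 of a keypoint, as covectors c with l = c (R b + t):
   s = 0 : - e3^T ;
   s = 1,2 : +/- e1^T (y e3^T - K) - r e3^T ;
   s = 3,4 : +/- e2^T (y e3^T - K) - r e3^T *)
Definition cvec (K : 'M[R]_3) (u v rad : R) (s : 'I_5) : 'rV[R]_3 :=
  let M := ypix u v *m e3^T - K in
  match nat_of_ord s with
  | 0 => - e3^T
  | 1 => (e_ 0)^T *m M - rad *: e3^T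
  | 2 => - ((e_ 0)^T *m M) - rad *: e3^T
  | 3 => (e_ 1)^T *m M - rad *: e3^T
  | _ => - ((e_ 1)^T *m M) - rad *: e3^T
  end.

(* the 5N matrices A_i, indexed by a keypoint k and s in [5] *)
Definition Amat N (b : 'I_N -> 'cV[R]_3) (u v rad : 'I_N -> R) (K : 'M[R]_3)
  (k : 'I_N) (s : 'I_5) : 'M[R]_13 :=
  ell_mat (cvec K (u k) (v k) (rad k) s) (b k).

Definition xfull (y : 'cV[R]_12) : 'cV[R]_13 := col_mx 1%:M y.

Definition inP N (b : 'I_N -> 'cV[R]_3) (u v rad : 'I_N -> R) (K : 'M[R]_3)
  (y : 'cV[R]_12) : Prop :=
  (forall k s, qf (Amat b u v rad K k s) (xfull y) <= 0) /\
  (forall j, qf (Qmat j) (xfull y) = 0).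

Definition vecmx (M : 'M[R]_3) : 'cV[R]_9 :=
  \col_(i < 9) M (inord (i %% 3)%N) (inord (i %/ 3)%N).

Definition xbar (Rbar : 'M[R]_3) (tbar : 'cV[R]_3) : 'cV[R]_12 :=
  col_mx (vecmx Rbar) tbar.

Definition Wmat (xb : 'cV[R]_12) (H : 'M[R]_12) : 'M[R]_13 :=
  block_mx (xb^T *m H *m xb - 1%:M) (- (xb^T *m H)) (- (H *m xb)) H.

(* p is SOS of order k: p = [x]_k^T G [x]_k with G PSD, where [x]_k is the
   vector of all monomials in y of degree <= k (x_1 = 1). *)
Definition sos (k : nat) (p : {mpoly R[12]}) : Prop :=
  exists G : 'X_{1..12 < k.+1} -> 'X_{1..12 < k.+1} -> R,
    (forall m1 m2, G m1 m2 = G m2 m1) /\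
    (forall w : 'X_{1..12 < k.+1} -> R,
        0 <= \sum_m1 \sum_m2 w m1 * G m1 m2 * w m2) /\
    p = \sum_m1 \sum_m2 G m1 m2 *: 'X_[(m1 : 'X_{1..12}) + m2].

(* log det with the usual extended-value convention (-oo outside PD) *)
Definition logdet n (H : 'M[R]_n) : \bar R :=
  if 0 < \det H then (ln (\det H))%:E else (-oo)%E.

(* feasibility of H for the order-(kappa+1) program *)
Definition feasible N (b : 'I_N -> 'cV[R]_3) (u v rad : 'I_N -> R)
  (K Rbar : 'M[R]_3) (tbar : 'cV[R]_3) (kappa : nat) (H : 'M[R]_12) : Prop :=
  psdmx H /\
  exists (lam : 'I_N -> 'I_5 -> {mpoly R[12]}) (mu : 'I_15 -> {mpoly R[12]}),
    (forall k s, (msize (lam k s) <= (2 * kappa).+1)%N /\ sos kappa (lam k s)) /\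
    (forall j, (msize (mu j) <= (2 * kappa).+1)%N) /\
    sos kappa.+1
      (\sum_(k < N) \sum_(s < 5) lam k s * quadform (Amat b u v rad K k s)
       + \sum_(j < 15) mu j * quadform (Qmat j)
       - quadform (Wmat (xbar Rbar tbar) H)).

Definition is_maximizer N (b : 'I_N -> 'cV[R]_3) (u v rad : 'I_N -> R)
  (K Rbar : 'M[R]_3) (tbar : 'cV[R]_3) (kappa : nat) (H : 'M[R]_12) : Prop :=
  feasible b u v rad K Rbar tbar kappa H /\
  forall H', feasible b u v rad K Rbar tbar kappa H' ->
    (logdet H' <= logdet H)%E.

End Defs.

(* Evaluating a feasible certificate at a point x of P: the multipliers lambda_i
   are SOS, hence nonnegative, and multiply the nonpositive values x^T A_i x;
   the terms mu_j x^T Q_j x vanish; so the SOS inequality forces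
   x^T W(H) x <= 0, which is the ellipsoid inequality.  Monotonicity in kappa
   holds because every certificate of order kappa + 1 is one of order kappa + 2
   (degree bounds only loosen, and a Gram matrix can be padded with zeros), so
   the feasible set only grows and so does the maximal log det. *)
From HB Require Import structures.
From mathcomp Require Import all_boot all_order all_algebra.
From mathcomp Require Import mpoly.
From mathcomp Require Import reals ereal exp.
From mathcomp Require Import ring lra.
Import Order.TTheory GRing.Theory Num.Theory.
Local Open Scope ring_scope.

Section SosCertificates.
Set Implicit Arguments.
Unset Strict Implicit.
Variable R : realType.

Definition widen_bmnm n k (m : 'X_{1..n < k.+1}) : 'X_{1..n < k.+2} :=
  BMultinom (ltnW (bmdeg m) : (mdeg m < k.+2)%N).
Arguments widen_bmnm {n k}.

Lemma big_bmnm_widen (V : nmodType) n k (F : 'X_{1..n < k.+2} -> V) :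
  (forall m : 'X_{1..n < k.+2}, ~~ (mdeg m < k.+1)%N -> F m = 0) ->
  \sum_m F m = \sum_(m : 'X_{1..n < k.+1}) F (widen_bmnm m).
Proof.
move=> F0; rewrite (bigID (fun m : 'X_{1..n < k.+2} => (mdeg m < k.+1)%N)) /=.
rewrite [X in _ + X]big1 ?addr0; last by move=> m /F0.
rewrite (reindex_omap widen_bmnm (fun m => insub (val m))) /=.
  by apply: eq_bigl => m; rewrite (bmdeg m) valK eqxx.
by move=> m Hm; rewrite insubT /=; congr Some; apply: val_inj.
Qed.

Lemma sosS k (p : {mpoly R[12]}) : sos k p -> sos k.+1 p.
Proof.
case=> G [Gsym [Gpsd ->]].
pose narrow (m : 'X_{1..12 < k.+2}) : option 'X_{1..12 < k.+1} := insub (val m).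
pose G' m1 m2 := if (narrow m1, narrow m2) is (Some a, Some c) then G a c else 0.
have G'0l (m1 m2 : 'X_{1..12 < k.+2}) : ~~ (mdeg m1 < k.+1)%N -> G' m1 m2 = 0.
  by move=> h; rewrite /G' /narrow insubN.
have G'0r (m1 m2 : 'X_{1..12 < k.+2}) : ~~ (mdeg m2 < k.+1)%N -> G' m1 m2 = 0.
  by move=> h; rewrite /G' /narrow; case: (insub _) => // a; rewrite insubN.
have G'E a c : G' (widen_bmnm a) (widen_bmnm c) = G a c by rewrite /G' /narrow !valK.
have widen_sum2 (V : nmodType) (F : 'X_{1..12 < k.+2} -> 'X_{1..12 < k.+2} -> R -> V) :
    (forall m1 m2, F m1 m2 0 = 0) ->
    \sum_m1 \sum_m2 F m1 m2 (G' m1 m2)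
    = \sum_a \sum_c F (widen_bmnm a) (widen_bmnm c) (G a c).
  move=> F0; rewrite big_bmnm_widen; last first.
    by move=> m1 h; apply: big1 => m2 _; rewrite G'0l.
  apply: eq_bigr => a _; rewrite big_bmnm_widen; last by move=> m2 h; rewrite G'0r.
  by apply: eq_bigr => c _; rewrite G'E.
exists G'; split; [|split].
- by move=> m1 m2; rewrite /G'; case: (narrow m1) => [a|]; case: (narrow m2) => [c|].
- move=> w; apply: (le_trans (Gpsd (fun a => w (widen_bmnm a)))).
  rewrite (widen_sum2 _ (fun m1 m2 g => w m1 * g * w m2)) // => *.
  by rewrite mulr0 mul0r.
- rewrite (widen_sum2 _ (fun (m1 m2 : 'X_{1..12 < k.+2}) g => g *: 'X_[bmnm m1 + bmnm m2])) //.
  by move=> *; rewrite scale0r.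
Qed.

Lemma sos_meval_ge0 k (p : {mpoly R[12]}) e : sos k p -> 0 <= p.@[e].
Proof.
case=> G [_ [Gpsd ->]].
have := Gpsd (fun m => 'X_[(m : 'X_{1..12})].@[e]).
rewrite (big_morph _ (mevalD _) (meval0 _)); congr (_ <= _); apply: eq_bigr => m1 _.
rewrite (big_morph _ (mevalD _) (meval0 _)); apply: eq_bigr => m2 _.
by rewrite mevalZ mpolyXD mevalM; ring.
Qed.

Lemma qfE n (M : 'M[R]_n) (w : 'cV[R]_n) :
  qf M w = \sum_i \sum_j M i j * (w i 0 * w j 0).
Proof.
rewrite /qf mxE exchange_big /=; apply: eq_bigr => j _.
by rewrite mxE mulr_suml; apply: eq_bigr => i _; rewrite !mxE; ring.
Qed.

Lemma meval_xvar (y : 'cV[R]_12) i : (xvar R i).@[fun j => y j 0] = xfull y i 0.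
Proof.
rewrite /xvar /xfull; case: unliftP => [j ->|->].
  have -> : lift ord0 j = rshift 1 j :> 'I_(1 + 12) by apply: val_inj.
  by rewrite mevalXU (col_mxEd (1%:M : 'M[R]_1) y).
have -> : ord0 = lshift 12 (ord0 : 'I_1) :> 'I_(1 + 12) by apply: val_inj.
by rewrite meval1 (col_mxEu (1%:M : 'M[R]_1) y) mxE.
Qed.

Lemma meval_quadform (y : 'cV[R]_12) M :
  (quadform M).@[fun j => y j 0] = qf M (xfull y).
Proof.
rewrite qfE /quadform (big_morph _ (mevalD _) (meval0 _)); apply: eq_bigr => i _.
rewrite (big_morph _ (mevalD _) (meval0 _)); apply: eq_bigr => j _.
by rewrite mevalZ mevalM !meval_xvar.
Qed.

Lemma qf_block_mx m n (x : 'cV[R]_m) (y : 'cV[R]_n) A B C D :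
  qf (block_mx A B C D) (col_mx x y)
  = qf A x + (x^T *m B *m y) 0 0 + (y^T *m C *m x) 0 0 + qf D y.
Proof.
rewrite /qf tr_col_mx mul_row_block mul_row_col !mulmxDl !mxE.
by ring.
Qed.

Lemma qf_Wmat (y xb : 'cV[R]_12) (H : 'M[R]_12) :
  qf (Wmat xb H) (xfull y) = qf H (y - xb) - 1.
Proof.
rewrite /Wmat /xfull (qf_block_mx 1%:M y).
rewrite /qf trmx1 !mul1mx !mulmx1 !mulmxN !mulNmx.
rewrite (raddfB (@trmx R 12 1)) /= !mulmxBl !mulmxBr !mulmxA.
move: (xb^T *m H *m xb) (y^T *m H *m xb) (xb^T *m H *m y) (y^T *m H *m y) => a1 a2 a3 a4.
by rewrite !mxE eqxx /=; ring.
Qed.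

Variables (N : nat) (b : 'I_N -> 'cV[R]_3) (u v rad : 'I_N -> R).
Variables (K Rbar : 'M[R]_3) (tbar : 'cV[R]_3).

Lemma feasible_ellipsoid kappa H y :
  feasible b u v rad K Rbar tbar kappa H -> inP b u v rad K y ->
  qf H (y - xbar Rbar tbar) <= 1.
Proof.
move=> [_ [lam [mu [lam_sos [_ cert]]]]] [Ale0 Qeq0].
pose e j := y j 0.
have evalA : \sum_(k < N) (\sum_(s < 5) lam k s * quadform (Amat b u v rad K k s)).@[e] <= 0.
  rewrite -oppr_ge0 -sumrN; apply: sumr_ge0 => k _.
  rewrite (big_morph _ (mevalD _) (meval0 _)) -sumrN; apply: sumr_ge0 => s _.
  rewrite mevalM meval_quadform -mulrN; apply: mulr_ge0; last by rewrite oppr_ge0.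
  exact: sos_meval_ge0 (proj2 (lam_sos k s)).
have evalQ : \sum_(j < 15) (mu j * quadform (Qmat R j)).@[e] = 0.
  by apply: big1 => j _; rewrite mevalM meval_quadform Qeq0 mulr0.
have := sos_meval_ge0 e cert.
rewrite mevalB mevalD meval_quadform qf_Wmat !(big_morph _ (mevalD _) (meval0 _)) evalQ.
lra.
Qed.

Lemma feasibleS kappa H :
  feasible b u v rad K Rbar tbar kappa H -> feasible b u v rad K Rbar tbar kappa.+1 H.
Proof.
have deg_le (p : {mpoly R[12]}) : (msize p <= (2 * kappa).+1 -> msize p <= (2 * kappa.+1).+1)%N.
  by move=> /leq_trans; apply; rewrite mulnS !ltnS leqW.
move=> [Hpsd [lam [mu [lam_sos [mu_deg cert]]]]]; split => //.
exists lam, mu; split; [|split; [|exact: sosS]].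
- by move=> k s; have [? ?] := lam_sos k s; split; [exact: deg_le | exact: sosS].
- by move=> j; exact: deg_le.
Qed.

End SosCertificates.

Theorem proposition5 (R : realType) (N : nat) (b : 'I_N -> 'cV[R]_3)
  (u v rad : 'I_N -> R) (K Rbar : 'M[R]_3) (tbar : 'cV[R]_3) :
  (forall k, 0 < rad k) ->
  (forall (kappa : nat) (H : 'M[R]_12),
     is_maximizer b u v rad K Rbar tbar kappa H ->
     forall y : 'cV[R]_12, inP b u v rad K y ->
       qf H (y - xbar Rbar tbar) <= 1) /\
  (forall (kappa : nat) (H1 H2 : 'M[R]_12),
     is_maximizer b u v rad K Rbar tbar kappa H1 ->
     is_maximizer b u v rad K Rbar tbar kappa.+1 H2 ->
     (logdet H1 <= logdet H2)%E).
Proof.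
(* Neither claim needs the positivity of the radii. *)
move=> _; split.
- by move=> kappa H [H_feas _] y Py; exact: feasible_ellipsoid H_feas Py.
- move=> kappa H1 H2 [H1_feas _] [_ H2_max].
  exact/H2_max/feasibleS.
Qed.
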